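(* Let $\delta_j,\delta_k$ be coprime integers with $1<\delta_j<\delta_k$, and let $(x'_j,x'_k)$ be a B\'ezout couple for $(\delta_j,\ \delta_k\bmod\delta_j)$, associated to $i=x'_j\delta_j+x'_k(\delta_k\bmod\delta_j)\le\delta_j$. Then $\big(x'_k,\ x'_j-x'_k\lfloor\delta_k/\delta_j\rfloor\big)$ is a B\'ezout couple for $(\delta_k,\delta_j)$ (associated to the same $i$).
   Context: For coprime positive integers $p,q$, a B\'ezout couple for $(p,q)$ associated to $i\in\{1,\ldots,\max\{p,q\}\}$ is a pair $(x,y)\in\mathbb Z^2$ with $xp+yq=i$ and either $0<y\le p$ (the $\lambda$-B\'ezout couple of $i$, unique) or $0<x\le q$ (the $\mu$-B\'ezout couple of $i$, unique). Note $\delta_k\bmod\delta_j\ge1$ is coprime to $\delta_j$. *)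

From mathcomp Require Import all_boot all_order all_algebra.
Set Implicit Arguments. Unset Strict Implicit. Unset Printing Implicit Defensive.
Import Order.TTheory GRing.Theory Num.Theory.
Local Open Scope ring_scope.

Definition lambda_bezout (p q i : nat) (x y : int) : Prop :=
  x * p%:Z + y * q%:Z = i%:Z /\ 0 < y /\ y <= p%:Z.

Definition mu_bezout (p q i : nat) (x y : int) : Prop :=
  x * p%:Z + y * q%:Z = i%:Z /\ 0 < x /\ x <= q%:Z.

Definition bezout_couple (p q i : nat) (x y : int) : Prop :=
  [/\ (0 < p)%N, (0 < q)%N, coprime p q, (1 <= i <= maxn p q)%N &
      (lambda_bezout p q i x y \/ mu_bezout p q i x y)].

From mathcomp Require Import all_boot all_order all_algebra.
From mathcomp Require Import zify ring.
Import Order.TTheory GRing.Theory Num.Theory.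
Local Open Scope ring_scope.

(* Writing dk = q dj + r, the map (x, y) |-> (y, x - q y) preserves x dj + y r = y dk + (x - q y) dj.
   A lambda-couple (0 < y <= dj) thus becomes a mu-couple for (dk, dj).  For a mu-couple
   (0 < x <= r) the bound i <= dj forces y <= 0 and -y <= dj, whence 0 < x - q y <= r + q dj = dk:
   a lambda-couple for (dk, dj). *)

Lemma bezout_euclid_stepE (p r q : nat) (x y : int) :
  y * (q * p + r)%N%:Z + (x - y * q%:Z) * p%:Z = x * p%:Z + y * r%:Z.
Proof. by rewrite PoszD PoszM; ring. Qed.

Lemma lambda_bezout_euclid_step (p r q i : nat) (x y : int) :
  lambda_bezout p r i x y -> mu_bezout (q * p + r) p i y (x - y * q%:Z).
Proof. by case=> e [y_gt0 y_le]; rewrite /mu_bezout bezout_euclid_stepE. Qed.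

Lemma mu_bezout_euclid_step (p r q i : nat) (x y : int) :
  (i <= p)%N -> mu_bezout p r i x y -> lambda_bezout (q * p + r) p i y (x - y * q%:Z).
Proof.
move=> i_le [e [x_gt0 x_le]]; split; first by rewrite bezout_euclid_stepE.
have y_le0 : y <= 0 by nia.
have y_ge : - y <= p%:Z by nia.
rewrite PoszD PoszM; split; nia.
Qed.

Theorem lemma3p3 (dj dk : nat) (i : nat) (xj xk : int) :
  coprime dj dk -> (1 < dj)%N -> (dj < dk)%N ->
  bezout_couple dj (dk %% dj) i xj xk ->
  (i <= dj)%N ->
  bezout_couple dk dj i xk (xj - xk * (dk %/ dj)%:Z).
Proof.
move=> cop_jk dj_gt1 dj_lt [_ _ _ /andP[i_ge1 _] couple] i_le.
split; [lia | lia | by rewrite coprime_sym | lia |].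
set q := (dk %/ dj)%N; set r := (dk %% dj)%N in couple.
have -> : dk = (q * dj + r)%N := divn_eq dk dj.
case: couple => [lam | mu].
- by right; apply: lambda_bezout_euclid_step.
- by left; apply: mu_bezout_euclid_step.
Qed.
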